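(* Let $n_1,\dots,n_m$ be positive integers, $n=n_1+\cdots+n_m$, let $\tau$ be a smooth $k$-representation of $M'=M'_{n_1,\dots,n_m}$ on a space $E$, and let $\theta$ be a non-degenerate character of $U=U_{n_1}\times\cdots\times U_{n_m}$. Then $\tau^{(n)}_{\theta}\neq0$ if and only if $\mathrm{Hom}_{k[U]}(\tau,\theta)\neq0$; in particular, this is equivalent to the $(U,\theta)$-coinvariants $E/\langle\tau(u)a-\theta(u)a: u\in U,a\in E\rangle$ of $\tau$ being non-zero.
   Context: $F$ is a non-archimedean locally compact field of residual characteristic $p$, $k$ an algebraically closed field of characteristic $\ell\neq p$. $M_{n_1,\dots,n_m}=\mathrm{GL}_{n_1}(F)\times\cdots\times\mathrm{GL}_{n_m}(F)$ embedded block-diagonally in $\mathrm{GL}_n(F)$, and $M'_{n_1,\dots,n_m}=M_{n_1,\dots,n_m}\cap\mathrm{SL}_n(F)$. $U_{n_i}$ is the upper unitriangular subgroup of $\mathrm{GL}_{n_i}(F)$, and $\theta:U\to k^\times$ is a smooth character trivial on $[U,U]$ and nontrivial on each simple root subgroup. Derivative: for $1\le s\le m$ and $2\le j\le n_s$ let $N_{s,j}\subset U$ be the subgroup of elements equal to the identity in all blocks except block $s$, where the entry is an upper unitriangular matrix whose only possibly nonzero off-diagonal entries are in column $j$, rows $1,\dots,j-1$. List these groups as $N_{m,n_m},N_{m,n_m-1},\dots,N_{m,2},N_{m-1,n_{m-1}},\dots,N_{1,2}$. Put $E_0=E$ and let $E_t$ be the quotient of $E_{t-1}$ by the span of $g a-\theta(g)a$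 for $g$ in the $t$-th group of the list and $a\in E_{t-1}$ (each $E_{t-1}$ is naturally acted on by the later groups of the list). The last quotient, a $k$-vector space, is the $n$-th derivative $\tau^{(n)}_\theta$ (denoted $\tau^{(n_1+\cdots+n_m)}_{\theta,m}$ in the paper). *)

From HB Require Import structures.
From mathcomp Require Import all_boot all_order all_algebra.
From mathcomp Require Import reals.
Set Implicit Arguments. Unset Strict Implicit. Unset Printing Implicit Defensive.
Import Order.TTheory GRing.Theory Num.Theory.
Local Open Scope ring_scope.

Section Field.
Variables (R : realType) (F : fieldType) (abs : F -> R).

Definition nonarch_abs : Prop :=
  [/\ forall x, abs x = 0 <-> x = 0,
      forall x, 0 <= abs x,
      forall x y, abs (x * y) = abs x * abs y
    & forall x y, abs (x + y) <= Num.max (abs x) (abs y)].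

Definition nontrivial_abs : Prop := exists x, abs x != 0 /\ abs x != 1.

Definition abs_open (O : F -> Prop) : Prop :=
  forall x, O x -> exists2 e : R, 0 < e & forall y, abs (y - x) < e -> O y.

Definition abs_compact (A : F -> Prop) : Prop :=
  forall (I : Type) (O : I -> F -> Prop), (forall i, abs_open (O i)) ->
    (forall x, A x -> exists i, O i x) ->
    exists (m : nat) (f : 'I_m -> I), forall x, A x -> exists j, O (f j) x.

Definition abs_locally_compact : Prop :=
  forall x, exists2 r : R, 0 < r & abs_compact (fun y => abs (y - x) <= r).

Definition nonarch_local_field : Prop :=
  [/\ nonarch_abs, nontrivial_abs & abs_locally_compact].

(* the residue field O_F / p_F has characteristic p *)
Definition residual_char (p : nat) : Prop := prime p /\ abs (p%:R) < 1.
End Field.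

(* block index (0-based) of the global (0-based) index i for sizes ns *)
Fixpoint blk (ns : seq nat) (i : nat) : nat :=
  match ns with
  | [::] => 0%N
  | m :: ns' => if (i < m)%N then 0%N else (blk ns' (i - m)%N).+1
  end.

Section Groups.
Variables (R : realType) (F : fieldType) (abs : F -> R) (ns : seq nat).
Local Notation n := (sumn ns).

Definition blockdiag (A : 'M[F]_n) : Prop :=
  forall i j : 'I_n, blk ns i != blk ns j -> A i j = 0.

Definition Mprime (A : 'M[F]_n) : Prop := blockdiag A /\ \det A = 1.

Definition Uset (A : 'M[F]_n) : Prop :=
  [/\ blockdiag A, forall i : 'I_n, A i i = 1
    & forall i j : 'I_n, (j < i)%N -> A i j = 0].

(* global column c is column j >= 2 (1-based) of its block *)
Definition deriv_col (c : 'I_n) : Prop :=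
  (0 < c)%N /\ blk ns c.-1 = blk ns c.

(* N_{s,j} for the block s and local column j corresponding to global column c *)
Definition Nset (c : 'I_n) (A : 'M[F]_n) : Prop :=
  Uset A /\ forall i j : 'I_n, i != j -> j != c -> A i j = 0.

Definition near1 (e : R) (g : 'M[F]_n) : Prop :=
  forall i j : 'I_n, abs (g i j - (i == j)%:R) < e.

Variables (k : fieldType) (E : lmodType k).

Definition smooth_rep (tau : 'M[F]_n -> E -> E) : Prop :=
  [/\ forall g, Mprime g -> forall (c : k) (a b : E),
        tau g (c *: a + b) = c *: tau g a + tau g b,
      forall a, tau 1%:M a = a,
      forall g h, Mprime g -> Mprime h -> forall a, tau (g *m h) a = tau g (tau h a)
    & forall a, exists2 e : R, 0 < e &
        forall g, Mprime g -> near1 e g -> tau g a = a].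

Definition smooth_char (theta : 'M[F]_n -> k) : Prop :=
  [/\ forall u, Uset u -> theta u != 0,
      forall u v, Uset u -> Uset v -> theta (u *m v) = theta u * theta v
    & exists2 e : R, 0 < e & forall u, Uset u -> near1 e u -> theta u = 1].

(* non-trivial on each simple root subgroup *)
Definition nondeg_char (theta : 'M[F]_n -> k) : Prop :=
  smooth_char theta /\
  forall i j : 'I_n, j = i.+1 :> nat -> blk ns i = blk ns j ->
    exists t : F, theta (1%:M + t *: delta_mx i j) != 1.

Definition inspan (S : E -> Prop) (v : E) : Prop :=
  exists s : seq (k * E), {in s, forall x, S x.2} /\ v = \sum_(x <- s) x.1 *: x.2.

(* kernel of E ->> tau^(n)_theta: unfolding the iterated quotients,
   E_t = E / (sum over the first t groups N of span{g a - theta(g) a}) *)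
Definition deriv_kernel (tau : 'M[F]_n -> E -> E) (theta : 'M[F]_n -> k) : E -> Prop :=
  inspan (fun w => exists c g a, [/\ deriv_col c, Nset c g & w = tau g a - theta g *: a]).

Definition derivative_nonzero tau theta : Prop := exists v, ~ deriv_kernel tau theta v.

Definition Hom_U_nonzero (tau : 'M[F]_n -> E -> E) (theta : 'M[F]_n -> k) : Prop :=
  exists f : E -> k,
    [/\ forall (c : k) (a b : E), f (c *: a + b) = c * f a + f b,
        forall u a, Uset u -> f (tau u a) = theta u * f a
      & exists a, f a != 0].

Definition coinvariants_nonzero (tau : 'M[F]_n -> E -> E) (theta : 'M[F]_n -> k) : Prop :=
  exists v, ~ inspan (fun w => exists u a, Uset u /\ w = tau u a - theta u *: a) v.
End Groups.

(* The kernel of E ->> tau^(n)_theta is spanned by the vectors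
   tau(g)a - theta(g)a with g in the groups N_{s,j}; we show it contains them
   for every g in U.  The set of g acting by the scalar theta(g) modulo a
   subspace is closed under products, and every u in U is the product, column
   by column, of elements of the N_{s,j} (a column starting a block gives the
   identity factor).  So this kernel is the span defining the
   (U,theta)-coinvariants, and a quotient of E by such a span is nonzero
   exactly when some nonzero linear form transforms under U by theta: a vector
   outside the span yields one by Zorn's lemma.  The argument is purely
   algebraic. *)

From HB Require Import structures.
From mathcomp Require Import all_boot all_order all_algebra.
From mathcomp Require Import reals.
From mathcomp Require Import boolp classical_sets.
Import Order.TTheory GRing.Theory Num.Theory.
Set Implicit Arguments. Unset Strict Implicit. Unset Printing Implicit Defensive.
Local Open Scope ring_scope.
Local Open Scope classical_set_scope.

Section Subspaces.
Variables (k : fieldType) (E : lmodType k).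
Implicit Types (S W : set E).

Definition subspace W := W 0 /\ forall c x y, W x -> W y -> W (c *: x + y).

Lemma subspaceD W x y : subspace W -> W x -> W y -> W (x + y).
Proof. by move=> [_ WZD] Wx Wy; rewrite -[x]scale1r; apply: WZD. Qed.

Lemma subspaceZ W c x : subspace W -> W x -> W (c *: x).
Proof. by move=> [W0 WZD] Wx; rewrite -[c *: x]addr0; apply: WZD. Qed.

Lemma subspaceB W x y : subspace W -> W x -> W y -> W (x - y).
Proof.
by move=> sW Wx Wy; rewrite -scaleN1r; apply: subspaceD => //; apply: subspaceZ.
Qed.

Lemma mem_inspan S x : S x -> inspan S x.
Proof.
move=> Sx; exists [:: (1, x)]; split; last by rewrite big_seq1 scale1r.
by move=> y; rewrite inE => /eqP ->.
Qed.

Lemma inspan_subspace S : subspace (inspan S).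
Proof.
split; first by exists [::]; rewrite big_nil.
move=> c _ _ [s [Ss ->]] [t [St ->]].
exists ([seq (c * z.1, z.2) | z <- s] ++ t); split.
  by move=> z; rewrite mem_cat => /orP[/mapP[y /Ss Sy ->]|/St].
rewrite big_cat big_map scaler_sumr; congr (_ + _).
by apply: eq_bigr => z _; rewrite scalerA.
Qed.

End Subspaces.

Section ScalarForm.
Variables (k : fieldType) (E : lmodType k) (f : E -> k).
Hypothesis f_scalar : scalar f.
HB.instance Definition _ := GRing.isLinear.Build k E k *%R f f_scalar.

Lemma scalar_inspan_eq0 (S : set E) x :
  (forall y, S y -> f y = 0) -> inspan S x -> f x = 0.
Proof.
move=> fS [s [Ss ->]]; rewrite linear_sum big1_seq // => z /Ss Sz.
by rewrite linearZ_LR /= fS ?mulr0.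
Qed.

Lemma scalar_eq0_subZ x y c : (f (x - c *: y) == 0) = (f x == c * f y).
Proof. by rewrite linearB linearZ_LR /= subr_eq0. Qed.
End ScalarForm.

Section Separation.
Variables (k : fieldType) (E : lmodType k).
Implicit Types (D W : set E) (v x : E).

Lemma ex_maximal_subspace_avoiding D v : subspace D -> ~ D v ->
  exists W, [/\ subspace W, D `<=` W, ~ W v &
    forall W', subspace W' -> W `<=` W' -> ~ W' v -> W' `<=` W].
Proof.
move=> sD Dv.
(* Using D `|` X rather than X copes with the empty chain, whose union is set0. *)
pose P X := subspace (D `|` X) /\ ~ (D `|` X) v.
have chainP (C : set (set E)) :
    C `<=` P -> total_on C subset -> P (\bigcup_(X in C) X).
  move=> CP Ctot; set U := \bigcup_(X in C) X.
  have DXU X : C X -> D `|` X `<=` D `|` U.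
    by move=> CX z [Dz|Xz]; [left | right; exists X].
  have common x y : (D `|` U) x -> (D `|` U) y ->
      exists X, [/\ P X, D `|` X `<=` D `|` U, (D `|` X) x & (D `|` X) y].
    move=> [Dx|[X CX Xx]] [Dy|[Y CY Yy]].
    - by exists set0; rewrite /P !setU0; split => //; exact: subsetUl.
    - by exists Y; split; [exact: CP | exact: DXU | left | right].
    - by exists X; split; [exact: CP | exact: DXU | right | left].
    - have [XY|YX] := Ctot X Y CX CY.
      + by exists Y; split; [exact: CP | exact: DXU | right; apply: XY | right].
      + by exists X; split; [exact: CP | exact: DXU | right | right; apply: YX].
  split; last by move=> [//|[X /CP [_ DXv] Xv]]; apply: DXv; right.
  split; first by left; case: sD.
  move=> c x y DUx DUy; have [X [[[_ sX] _] XU DXx DXy]] := common x y DUx DUy.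
  exact/XU/sX.
have [A [[sDA DAv] Amax]] := Zorn_bigcup chainP.
exists (D `|` A); split => // W' sW' DAW' W'v.
apply: contrapT => W'DA; apply: (Amax W').
  split; first by apply: subset_trans DAW'; exact: subsetUr.
  by move=> W'A; apply: W'DA; apply: subset_trans W'A _; exact: subsetUr.
by rewrite /P setUidr //; apply: subset_trans DAW'; exact: subsetUl.
Qed.

Lemma maximal_avoiding_decomposition W v : subspace W -> ~ W v ->
    (forall W', subspace W' -> W `<=` W' -> ~ W' v -> W' `<=` W) ->
  forall x, exists c, W (x - c *: v).
Proof.
move=> sW Wv Wmax x.
pose Wx z := exists2 w, W w & exists c, z = w + c *: x.
have sWx : subspace Wx.
  split; first by exists 0; [case: sW | exists 0; rewrite scale0r addr0].
  move=> a _ _ [w1 W1 [c1 ->]] [w2 W2 [c2 ->]].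
  exists (a *: w1 + w2); first by case: sW => _; apply.
  by exists (a * c1 + c2); rewrite scalerDr scalerA scalerDl addrACA.
have WWx : W `<=` Wx by move=> w Ww; exists w => //; exists 0; rewrite scale0r addr0.
have [[w Ww [c defv]] | Wxv] := pselect (Wx v); last first.
  exists 0; rewrite scale0r subr0; apply: (Wmax Wx) => //.
  by exists 0; [case: sW | exists 1; rewrite add0r scale1r].
have c0 : c != 0 by apply: contra_notN Wv => /eqP c0; rewrite defv c0 scale0r addr0.
exists c^-1; rewrite defv scalerDr scalerA mulVf // scale1r opprD addrCA subrr addr0.
by rewrite -scaleNr; apply: subspaceZ.
Qed.

Lemma separating_scalar D v : subspace D -> ~ D v ->
  exists f : E -> k, [/\ scalar f, f v = 1 & forall x, D x -> f x = 0].
Proof.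
move=> sD Dv; have [W [sW DW Wv Wmax]] := ex_maximal_subspace_avoiding sD Dv.
have coefP := maximal_avoiding_decomposition sW Wv Wmax.
have coef_uniq x c d : W (x - c *: v) -> W (x - d *: v) -> c = d.
  move=> Wc Wd; apply: contra_notP Wv => /eqP cd.
  have := subspaceZ (c - d)^-1 sW (subspaceB sW Wd Wc).
  have -> : x - d *: v - (x - c *: v) = (c - d) *: v.
    by rewrite opprB addrC addrA subrK scalerBl.
  by rewrite scalerA mulVf ?subr_eq0 // scale1r.
pose f x := projT1 (cid (coefP x)).
have fP x : W (x - f x *: v) := projT2 (cid (coefP x)).
exists f; split.
- move=> c a b; apply: (coef_uniq (c *: a + b)) => //.
  have := subspaceD sW (subspaceZ c sW (fP a)) (fP b).
  by rewrite scalerBr scalerA scalerDl opprD addrACA.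
- by apply: (coef_uniq v) => //; rewrite scale1r subrr; case: sW.
- by move=> x Dx; apply: (coef_uniq x) => //; rewrite scale0r subr0; exact: DW.
Qed.
End Separation.

Section ActsByMod.
Variables (G : Type) (k : fieldType) (E : lmodType k).
Variables (S : set E) (rho : G -> E -> E) (chi : G -> k).

Definition acts_by_mod g := forall a, S (rho g a - chi g *: a).

Hypothesis S_subspace : subspace S.

Lemma acts_by_mod_id g : rho g =1 id -> chi g = 1 -> acts_by_mod g.
Proof. by move=> rho_g chi_g a; rewrite rho_g chi_g scale1r subrr; case: S_subspace. Qed.

Lemma acts_by_mod_comp g h gh :
    rho gh =1 rho g \o rho h -> chi gh = chi g * chi h ->
  acts_by_mod g -> acts_by_mod h -> acts_by_mod gh.
Proof.
move=> rho_gh chi_gh Sg Sh a; rewrite rho_gh chi_gh /=.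
have -> : rho g (rho h a) - (chi g * chi h) *: a =
    (rho g (rho h a) - chi g *: rho h a) + chi g *: (rho h a - chi h *: a).
  by rewrite scalerBr scalerA addrA subrK.
by apply: subspaceD => //; apply: subspaceZ.
Qed.
End ActsByMod.

Lemma equivariant_form_exists_iff (G : Type) (k : fieldType) (E : lmodType k)
    (rho : G -> E -> E) (chi : G -> k) (H : set G) (S : set E) :
    (forall w, S w -> exists u a, H u /\ w = rho u a - chi u *: a) ->
    (forall u, H u -> acts_by_mod (inspan S) rho chi u) ->
  (exists f : E -> k, [/\ scalar f,
     forall u a, H u -> f (rho u a) = chi u * f a & exists a, f a != 0]) <->
  exists v, ~ inspan S v.
Proof.
move=> S_rel H_acts; split => [[f [f_scalar f_equiv [a fa]]] | [v Sv]].
  exists a => Sa; move/eqP: fa; apply; apply: (scalar_inspan_eq0 f_scalar _ Sa).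
  move=> _ /S_rel[u [b [Hu ->]]]; apply/eqP.
  by rewrite scalar_eq0_subZ // f_equiv.
have [f [f_scalar fv f0]] := separating_scalar (inspan_subspace S) Sv.
exists f; split => //; last by exists v; rewrite fv oner_neq0.
by move=> u a Hu; apply/eqP; rewrite -scalar_eq0_subZ //; apply/eqP/f0/H_acts.
Qed.

Lemma leq_blk ns i j : (i <= j)%N -> (blk ns i <= blk ns j)%N.
Proof.
elim: ns i j => [//|m ns IH] i j ij /=.
case: ifP => im; case: ifP => jm //; first by rewrite (leq_ltn_trans ij jm) in im.
by rewrite ltnS; apply: IH; apply: leq_sub2r.
Qed.

Section UnitriangularFactorization.
Variables (F : fieldType) (ns : seq nat).
Local Notation n := (sumn ns).
Implicit Types (u : 'M[F]_n) (P : pred 'I_n).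

Definition mask_cols P u : 'M[F]_n :=
  \matrix_(i, j) if P j then u i j else (i == j)%:R.

Definition leading_cols (t : nat) u := mask_cols (fun j => (j < t)%N) u.

Lemma Uset1 : Uset (1%:M : 'M[F]_n).
Proof.
split=> [i j bij | i | i j ji]; rewrite mxE ?eqxx //.
- by case: (i =P j) bij => [->|]; rewrite ?eqxx.
- by case: (i =P j) ji => [->|]; rewrite ?ltnn.
Qed.

Lemma Uset_Mprime u : Uset u -> Mprime u.
Proof.
move=> [bu du lu]; split => //.
rewrite -det_tr det_trig; last by apply/is_trig_mxP => i j ij; rewrite mxE lu.
by rewrite big1 // => i _; rewrite mxE du.
Qed.

Lemma Uset_mask_cols P u : Uset u -> Uset (mask_cols P u).
Proof.
move=> [bu du lu]; split=> [i j bij | i | i j ji]; rewrite mxE.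
- by case: ifP => _; [exact: bu | case: (i =P j) bij => [->|]; rewrite ?eqxx].
- by rewrite eqxx du; case: ifP.
- by case: ifP => _; [exact: lu | case: (i =P j) ji => [->|]; rewrite ?ltnn].
Qed.

Lemma Nset_mask_col u t : Uset u -> Nset t (mask_cols (pred1 t) u).
Proof.
move=> Uu; split; first exact: Uset_mask_cols.
by move=> i j ij jt; rewrite mxE /= (negbTE jt) (negbTE ij).
Qed.

(* When t starts a block, column t of u vanishes off the diagonal: above it
   by block diagonality, below it by triangularity. *)
Lemma mask_col_first u t : Uset u -> ~ deriv_col t -> mask_cols (pred1 t) u = 1%:M.
Proof.
move=> [bu du lu] t_first; apply/matrixP => i j; rewrite !mxE /=.
case: eqP => [->|] //; case: (ltngtP i t) => it.
- rewrite -val_eqE /= (ltn_eqF it); apply: bu; apply/eqP => bit; apply: t_first.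
  have t_gt0 : (0 < t)%N by apply: leq_ltn_trans it.
  split => //; apply/eqP; rewrite eqn_leq leq_blk ?leq_pred //= -bit.
  by apply: leq_blk; rewrite -ltnS prednK.
- by rewrite lu // -val_eqE /= gtn_eqF.
- by rewrite (val_inj it) eqxx du.
Qed.

Lemma leading_cols0 u : leading_cols 0 u = 1%:M.
Proof. by apply/matrixP => i j; rewrite !mxE. Qed.

Lemma leading_cols_all u : leading_cols n u = u.
Proof. by apply/matrixP => i j; rewrite !mxE ltn_ord. Qed.

Lemma leading_colsS u (t : 'I_n) : Uset u ->
  leading_cols t.+1 u = mask_cols (pred1 t) u *m leading_cols t u.
Proof.
move=> [_ _ lu].
pose D : 'M[F]_n := \matrix_(i, j) ((j == t)%:R * (u i t - (i == t)%:R)).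
have -> : mask_cols (pred1 t) u = 1%:M + D.
  apply/matrixP => i j; rewrite !mxE /=.
  by case: eqP => [->|_]; rewrite ?mul1r ?mul0r ?addr0 // addrC subrK.
rewrite mulmxDl mul1mx; apply/matrixP => i j.
rewrite !mxE (bigD1 t) //= big1 => [|l /negbTE lt]; last by rewrite !mxE lt !mul0r.
rewrite addr0 !mxE eqxx mul1r ltnS; case: (ltngtP j t) => jt.
- by rewrite (lu t j) // mulr0 addr0.
- have /negbTE -> : t != j by rewrite -val_eqE /= ltn_eqF.
  by rewrite mulr0 addr0.
- by rewrite (val_inj jt) eqxx mulr1 addrC subrK.
Qed.
End UnitriangularFactorization.

Lemma smooth_char1 (R : realType) (F : fieldType) (abs : F -> R) (ns : seq nat)
    (k : fieldType) (theta : 'M[F]_(sumn ns) -> k) :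
  smooth_char abs theta -> theta 1%:M = 1.
Proof.
have U1 := @Uset1 F ns; case=> theta_neq0 thetaM _.
by apply: (mulfI (theta_neq0 _ U1)); rewrite mulr1 -thetaM ?mulmx1.
Qed.

Section DerivativeKernel.
Variables (F : fieldType) (ns : seq nat) (k : fieldType) (E : lmodType k).
Variables (tau : 'M[F]_(sumn ns) -> E -> E) (theta : 'M[F]_(sumn ns) -> k).
Hypothesis tau1 : forall a, tau 1%:M a = a.
Hypothesis tauM : forall g h, Mprime g -> Mprime h ->
  forall a, tau (g *m h) a = tau g (tau h a).
Hypothesis theta1 : theta 1%:M = 1.
Hypothesis thetaM : forall u v, Uset u -> Uset v -> theta (u *m v) = theta u * theta v.

Lemma acts_by_mod_deriv_kernel u :
  Uset u -> acts_by_mod (deriv_kernel tau theta) tau theta u.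
Proof.
move=> Uu; have K_subspace : subspace (deriv_kernel tau theta) := inspan_subspace _.
suff lead t : (t <= sumn ns)%N ->
    acts_by_mod (deriv_kernel tau theta) tau theta (leading_cols t u).
  by rewrite -(leading_cols_all u); apply: lead.
elim: t => [_|t IH tn]; first by rewrite leading_cols0; apply: acts_by_mod_id.
pose t' : 'I_(sumn ns) := Ordinal tn.
have Ucol := Uset_mask_cols (pred1 t') Uu.
have Ulead := Uset_mask_cols (fun j : 'I_(sumn ns) => (j < t)%N) Uu.
rewrite (leading_colsS t' Uu); apply: acts_by_mod_comp => //.
- by move=> a; apply: tauM; apply: Uset_Mprime.
- exact: thetaM.
- have [t'_deriv|t'_first] := pselect (deriv_col t'); last first.
    by rewrite mask_col_first //; apply: acts_by_mod_id.
  move=> a; apply: mem_inspan; exists t', (mask_cols (pred1 t') u), a.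
  by split => //; exact: Nset_mask_col.
- exact: IH (ltnW tn).
Qed.
End DerivativeKernel.

Theorem proposition4p12
  (R : realType) (F : fieldType) (absF : F -> R) (p : nat)
  (hF : nonarch_local_field absF) (hp : residual_char absF p)
  (k : closedFieldType) (hl : p \notin [pchar k])
  (ns : seq nat) (hns : all (fun m => 0 < m)%N ns)
  (E : lmodType k) (tau : 'M[F]_(sumn ns) -> E -> E)
  (htau : smooth_rep absF tau)
  (theta : 'M[F]_(sumn ns) -> k) (htheta : nondeg_char absF theta) :
  (derivative_nonzero tau theta <-> Hom_U_nonzero tau theta) /\
  (Hom_U_nonzero tau theta <-> coinvariants_nonzero tau theta).
Proof.
case: htau => _ tau1 tauM _; case: htheta => theta_smooth _.
have theta1 := smooth_char1 theta_smooth; case: theta_smooth => _ thetaM _.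
have U_acts := acts_by_mod_deriv_kernel tau1 tauM theta1 thetaM.
split.
- apply: iff_sym; apply: equivariant_form_exists_iff U_acts.
  by move=> _ [_ [g [a [_ [Ug _] ->]]]]; exists g, a.
- apply: equivariant_form_exists_iff => // u Uu a.
  by apply: mem_inspan; exists u, a.
Qed.
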